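(* Let $\lambda=(\lambda^n_{s,h})_{n\in N,\,s\in S,\,h\in H}$ be any deterministic price decomposition process, and suppose the weekly uncertainties $(W_{s})_{s\in S}$ are weekly independent. Then for every week $s\in S$ and every state $x=(x^n)_{n\in N}\in\prod_{n\in N}X^n_{s}$, $$\sum_{n\in N} V^n_{s}[\lambda^n](x^n)+V^{A}_s[\lambda]\;\le\; V_{s}(x).$$
   Context: Setting. Weeks form a finite totally ordered set $S=\{s_0\prec\dots\prec\bar s\}$, with successor $s^+$ and an extra terminal week $s_{\mathrm{last}}=\bar s^+$; hours form a finite ordered set $H$. The system is a directed graph $(N,A)$ with node–arc incidence matrix $B\in\{-1,0,1\}^{N\times A}$ ($B_{n,a}=1$ if arc $a$ leaves $n$, $-1$ if it enters $n$, $0$ otherwise). For node $n$ and week $s$: the state $x^n_s\in X^n_s$ is the storage level at the first hour of week $s$; $W^n_s$ is the (random) vector of hourly uncertainties of week $s$ at node $n$; $u^n_s$ is the vector of hourly recourse controls; $f^n_s\in\mathbb{R}^{|H|}$ the hourly nodal import/export flows; for arc $a$, $q^a_s\in\mathbb{R}^{|H|}$ the hourly arc flows. Write $W_s=(W^n_s)_{n}$, $f_s=(f^n_s)_n$, $q_s=(q^a_s)_a$. Given are measurable weekly dynamics $x^n_{s^+}=g^n_s(x^n_s,w^n_s,u^n_s)$, nodal balance constraints $b^n_s(w^n_s,u^n_s)=f^n_s$, box constraints on hourly storage levels within the week and on hourly controls, weekly nodal costs $L^n_s(x^n_s,w^n_s,u^n_s)\in\mathbb{R}\cup\{+\infty\}$,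 weekly arc costs $L^a_s(q^a_s)\in\mathbb{R}\cup\{+\infty\}$, and final costs $K^n$. Weekly independence means the joint law of $(W_{s_0},\dots,W_{\bar s})$ is the product of its marginals. Decisions of week $s'$ taken from week $s$ onwards must be measurable with respect to $\sigma(W_s,\dots,W_{s'})$. Notation: $\langle\lambda^n_s,f^n_s\rangle=\sum_h\lambda^n_{s,h}f^n_{s,h}$, $\langle B^\top\lambda_s,q_s\rangle=\sum_h(B^\top\lambda_{s,h})^\top q_{s,h}$. Global cost-to-go: $V_s(x)=\min\mathbb{E}\big[\sum_{s'=s}^{\bar s}\big(\sum_{n}L^n_{s'}(X^n_{s'},W^n_{s'},U^n_{s'})+\sum_a L^a_{s'}(Q^a_{s'})\big)+\sum_n K^n(X^n_{s_{\mathrm{last}}})\big]$ over processes $(U,F,Q)$ subject to $X_s=x$, dynamics, balance and box constraints at each node, information constraints, and coupling $F_{s'}-BQ_{s'}=0$ for all $s'\in[s,\bar s]$. Nodal price cost-to-go: $V^n_s[\lambda^n](x^n)=\min\mathbb{E}\big[\sum_{s'=s}^{\bar s}\big(L^n_{s'}(X^n_{s'},W^n_{s'},U^n_{s'})+\langle\lambda^n_{s'},F^n_{s'}\rangle\big)+K^n(X^n_{s_{\mathrm{last}}})\big]$ over $(U^n,F^n)$ subject to $X^n_s=x^n$, nodal dynamics, balance, box and information constraints. Transport price cost-to-go (a constant): $V^A_s[\lambda]=\min\mathbb{E}\big[\sum_{s'=s}^{\bar s}\big(\sum_{a\in A}L^a_{s'}(Q^a_{s'})-\langle B^\top\lambda_{s'},Q_{s'}\rangle\big)\big]$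 over arc flow processes with $Q^a_{s'}$ measurable w.r.t. $\sigma(W_s,\dots,W_{s'})$. *)

From HB Require Import structures.
From mathcomp Require Import all_boot all_order all_algebra.
From mathcomp Require Import all_classical all_reals all_analysis measurable_realfun.
Unset Strict Implicit.
Unset Printing Implicit Defensive.
Import Order.TTheory GRing.Theory Num.Theory.
Local Open Scope classical_set_scope.
Local Open Scope ring_scope.

(*  - Weeks S = {0,...,T} (s_0 = 0, \bar s = T), terminal week s_last = T+1. *)
(*  - The hourly uncertainty vector W^n_s is indexed by a finite type IW n,  *)
(*    the hourly control vector u^n_s by a finite type IU n (these index     *)
(*    sets contain the hours).  Vector-valued random variables are families *)
(*    of real random variables (one per coordinate).                         *)
(*  - All processes are indexed by nat (weeks); only weeks in [s, T] matter. *)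

Section Model.
Context {R : realType} {d : measure_display} {Omega : measurableType d}.

Definition incidence {N A : finType} (src tgt : A -> N) (n : N) (a : A) : R :=
  (src a == n)%:R - (tgt a == n)%:R.

Definition sigmaW {N : finType} {IW : N -> finType}
    (W : nat -> forall n : N, IW n -> Omega -> R) (s t : nat) : set (set Omega) :=
  <<s [set E | exists r (n : N) (i : IW n) (B : set R),
         [/\ (s <= r <= t)%N, measurable B & E = W r n i @^-1` B] ] >>.

Definition measurable_wrt (G : set (set Omega)) (Z : Omega -> R) : Prop :=
  forall B : set R, measurable B -> G (Z @^-1` B).

(* weekly independence: the law of (W_0,...,W_T) is the product of the
   marginals, i.e. the sigma-algebras sigma(W_t), t in [0,T], are independent *)
Definition weekly_independent {N : finType} {IW : N -> finType}
    (P : probability Omega R) (T : nat)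
    (W : nat -> forall n : N, IW n -> Omega -> R) : Prop :=
  forall E : nat -> set Omega,
    (forall t, (t <= T)%N -> sigmaW W t t (E t)) ->
    P (\bigcap_(t in [set t | (t <= T)%N]) E t) = (\prod_(0 <= t < T.+1) P (E t))%E.

(* Joint (Borel) measurability of deterministic functions of vectors,
   expressed through composition with measurable random variables on Omega. *)
Definition jmeas_xwu {I J : Type} {dY : measure_display}
    {TY : measurableType dY} (f : R -> (I -> R) -> (J -> R) -> TY) : Prop :=
  forall (X : Omega -> R) (V : I -> Omega -> R) (Z : J -> Omega -> R),
    measurable_fun setT X -> (forall i, measurable_fun setT (V i)) ->
    (forall j, measurable_fun setT (Z j)) ->
    measurable_fun setT (fun w => f (X w) (fun i => V i w) (fun j => Z j w)).

Definition jmeas_vec {I : Type} {dY : measure_display} {TY : measurableType dY}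
    (f : (I -> R) -> TY) : Prop :=
  forall V : I -> Omega -> R, (forall i, measurable_fun setT (V i)) ->
    measurable_fun setT (fun w => f (fun i => V i w)).

(* state trajectory of one node started at x in week s:
   traj ... k is the state X_{s+k} *)
Fixpoint traj {I J : Type} (g : nat -> R -> (I -> R) -> (J -> R) -> R)
    (Wn : nat -> I -> Omega -> R) (U : nat -> J -> Omega -> R)
    (s : nat) (x : R) (k : nat) : Omega -> R :=
  match k with
  | 0 => fun _ => x
  | k'.+1 => fun w => g (s + k')%N (traj g Wn U s x k' w)
                        (fun i => Wn (s + k')%N i w) (fun j => U (s + k')%N j w)
  end.

(* X_t for t >= s *)
Definition state {I J : Type} (g : nat -> R -> (I -> R) -> (J -> R) -> R)
    (Wn : nat -> I -> Omega -> R) (U : nat -> J -> Omega -> R)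
    (s : nat) (x : R) (t : nat) : Omega -> R :=
  traj g Wn U s x (t - s).

Local Open Scope ereal_scope.

Section Nodal.
Variables (P : probability Omega R) (T : nat) (Info : nat -> nat -> set (set Omega)).
Variables (H I J : finType) (Wn : nat -> I -> Omega -> R).
Variables (g : nat -> R -> (I -> R) -> (J -> R) -> R)
          (b : nat -> (I -> R) -> (J -> R) -> H -> R)
          (box : nat -> R -> (I -> R) -> (J -> R) -> Prop)
          (L : nat -> R -> (I -> R) -> (J -> R) -> \bar R)
          (K : R -> \bar R)
          (lam : nat -> H -> R).

Definition nodal_admissible (s : nat) (x : R)
    (U : nat -> J -> Omega -> R) (F : nat -> H -> Omega -> R) : Prop :=
  forall t, (s <= t <= T)%N ->
    [/\ forall j, measurable_wrt (Info s t) (U t j),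
        forall h, measurable_wrt (Info s t) (F t h) &
        {ae P, forall w,
          (forall h, b t (fun i => Wn t i w) (fun j => U t j w) h = F t h w) /\
          box t (state g Wn U s x t w) (fun i => Wn t i w) (fun j => U t j w)}].

Definition nodal_cost (s : nat) (x : R)
    (U : nat -> J -> Omega -> R) (F : nat -> H -> Omega -> R) (w : Omega) : \bar R :=
  \sum_(s <= t < T.+1)
     (L t (state g Wn U s x t w) (fun i => Wn t i w) (fun j => U t j w)
      + (\sum_(h : H) lam t h * F t h w)%R%:E)
  + K (state g Wn U s x T.+1 w).

Definition Vnode (s : nat) (x : R) : \bar R :=
  ereal_inf [set e | exists U F, nodal_admissible s x U F /\
                                 e = \int[P]_w nodal_cost s x U F w].
End Nodal.

Section Transport.
Variables (P : probability Omega R) (T : nat) (Info : nat -> nat -> set (set Omega)).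
Variables (N A H : finType) (src tgt : A -> N).
Variables (La : A -> nat -> (H -> R) -> \bar R) (lam : nat -> N -> H -> R).

Definition transport_admissible (s : nat) (Q : nat -> A -> H -> Omega -> R) : Prop :=
  forall t, (s <= t <= T)%N -> forall a h, measurable_wrt (Info s t) (Q t a h).

Definition transport_cost (s : nat) (Q : nat -> A -> H -> Omega -> R) (w : Omega) : \bar R :=
  \sum_(s <= t < T.+1)
    (\sum_(a : A) La a t (fun h => Q t a h w)
     - (\sum_(h : H) \sum_(a : A)
          (\sum_(n : N) incidence src tgt n a * lam t n h) * Q t a h w)%R%:E).

Definition VA (s : nat) : \bar R :=
  ereal_inf [set e | exists Q, transport_admissible s Q /\
                               e = \int[P]_w transport_cost s Q w].
End Transport.

Section Global.
Variables (P : probability Omega R) (T : nat) (Info : nat -> nat -> set (set Omega)).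
Variables (N A H : finType) (src tgt : A -> N) (IW IU : N -> finType).
Variables (W : nat -> forall n : N, IW n -> Omega -> R)
          (g : forall n : N, nat -> R -> (IW n -> R) -> (IU n -> R) -> R)
          (b : forall n : N, nat -> (IW n -> R) -> (IU n -> R) -> H -> R)
          (box : forall n : N, nat -> R -> (IW n -> R) -> (IU n -> R) -> Prop)
          (L : forall n : N, nat -> R -> (IW n -> R) -> (IU n -> R) -> \bar R)
          (La : A -> nat -> (H -> R) -> \bar R)
          (K : N -> R -> \bar R).

Definition gstate (s : nat) (x : N -> R) (U : nat -> forall n : N, IU n -> Omega -> R)
    (n : N) (t : nat) : Omega -> R :=
  state (g n) (fun r i => W r n i) (fun r j => U r n j) s (x n) t.

Definition global_admissible (s : nat) (x : N -> R)
    (U : nat -> forall n : N, IU n -> Omega -> R)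
    (F : nat -> N -> H -> Omega -> R) (Q : nat -> A -> H -> Omega -> R) : Prop :=
  forall t, (s <= t <= T)%N ->
    [/\ forall n j, measurable_wrt (Info s t) (U t n j),
        forall n h, measurable_wrt (Info s t) (F t n h),
        forall a h, measurable_wrt (Info s t) (Q t a h) &
        {ae P, forall w,
          (forall n : N,
            (forall h, b n t (fun i => W t n i w) (fun j => U t n j w) h = F t n h w) /\
            box n t (gstate s x U n t w) (fun i => W t n i w) (fun j => U t n j w)) /\
          (forall n h, F t n h w = (\sum_(a : A) incidence src tgt n a * Q t a h w)%R)}].

Definition global_cost (s : nat) (x : N -> R)
    (U : nat -> forall n : N, IU n -> Omega -> R)
    (Q : nat -> A -> H -> Omega -> R) (w : Omega) : \bar R :=
  \sum_(s <= t < T.+1)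
    (\sum_(n : N) L n t (gstate s x U n t w) (fun i => W t n i w) (fun j => U t n j w)
     + \sum_(a : A) La a t (fun h => Q t a h w))
  + \sum_(n : N) K n (gstate s x U n T.+1 w).

Definition Vglob (s : nat) (x : N -> R) : \bar R :=
  ereal_inf [set e | exists U F Q, global_admissible s x U F Q /\
                                   e = \int[P]_w global_cost s x U Q w].
End Global.

End Model.

From HB Require Import structures.
From mathcomp Require Import all_boot all_order all_algebra.
From mathcomp Require Import all_classical all_reals all_analysis measurable_realfun.
Import Order.TTheory GRing.Theory Num.Theory.
Local Open Scope classical_set_scope.
Local Open Scope ring_scope.
Local Open Scope ereal_scope.

(* A global policy (U, F, Q) restricts to admissible policies of
   every nodal problem, (U^n, F^n), and of the transport problem, Q, so each
   price value function is at most the expected cost of its restriction.  Since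
   F = B Q almost surely, the price terms <lambda^n, F^n> of the nodes and
   -<B^T lambda, Q> of the transport cancel, and the nodal and transport costs add
   up to the global cost.  As no cost takes the value -oo, the expectation is
   superadditive, which gives the bound before taking the infimum over (U, F, Q). *)

Section integral_superadditive.
Context {d : measure_display} {T : measurableType d} {R : realType}.
Implicit Types f g : T -> \bar R.

Lemma funeneg_fin_num f x : f x != -oo -> f^\- x \is a fin_num.
Proof.
rewrite funenegE; case: (f x) => [r _| _|//].
  by rewrite -EFin_max.
by rewrite /maxe /= ltNyr.
Qed.

Lemma funenegD_le f g x : f x != -oo -> g x != -oo ->
  (f \+ g)^\- x <= f^\- x + g^\- x.
Proof.
move=> fx gx; rewrite !funenegE /= ge_max adde_ge0 ?le_max ?lexx ?orbT // andbT.
rewrite oppeD; last by move: fx gx; case: (f x); case: (g x).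
by apply: leeD; rewrite le_max lexx.
Qed.

Lemma funeD_posneg f g x : f x != -oo -> g x != -oo ->
  (f \+ g)^\+ x + (f^\- x + g^\- x) = (f \+ g)^\- x + (f^\+ x + g^\+ x).
Proof.
move=> fx gx.
have fgx : (f \+ g) x != -oo by rewrite /= adde_eq_ninfty negb_or fx gx.
have fin_fg := funeneg_fin_num (f \+ g) x fgx.
have fin_f_g : f^\- x + g^\- x \is a fin_num.
  by rewrite fin_numD (funeneg_fin_num f x fx) (funeneg_fin_num g x gx).
have Dpos := congr1 (fun h => h x) (funeD_Dpos f g).
have posD := congr1 (fun h => h x) (funeD_posD f g).
rewrite -[(f \+ g)^\+ x](subeK _ fin_fg) -[f^\+ x + g^\+ x](subeK _ fin_f_g).
by rewrite -Dpos -posD /= -addeA [in RHS]addeCA.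
Qed.

Lemma le_integralD (mu : {measure set T -> \bar R}) f g :
  measurable_fun setT f -> measurable_fun setT g ->
  (forall x, f x != -oo) -> (forall x, g x != -oo) ->
  \int[mu]_x f x + \int[mu]_x g x <= \int[mu]_x (f x + g x).
Proof.
move=> mf mg fNy gNy.
have mfg : measurable_fun setT (f \+ g) by exact: emeasurable_funD.
have mfp := measurable_funepos mf; have mfn := measurable_funeneg mf.
have mgp := measurable_funepos mg; have mgn := measurable_funeneg mg.
have mfgp := measurable_funepos mfg; have mfgn := measurable_funeneg mfg.
have fin_or_pinfty (h : T -> \bar R) :
    (\int[mu]_x h^\- x) \is a fin_num \/ \int[mu]_x h^\- x = +oo.
  have := integral_ge0 mu (fun x (_ : setT x) => funeneg_ge0 h x).
  by case: (\int[mu]_x h^\- x) => [r| |]; auto.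
rewrite (integralE _ _ f) (integralE _ _ g) (integralE _ _ (fun x => f x + g x)).
have [Nf_fin|->] := fin_or_pinfty f; last by rewrite addeNy addNye leNye.
have [Ng_fin|->] := fin_or_pinfty g; last by rewrite !addeNy leNye.
have parts : \int[mu]_x (f \+ g)^\+ x + (\int[mu]_x f^\- x + \int[mu]_x g^\- x)
    = \int[mu]_x (f \+ g)^\- x + (\int[mu]_x f^\+ x + \int[mu]_x g^\+ x).
  rewrite -!ge0_integralD //; try by [move=> x _; exact: adde_ge0
    | exact: emeasurable_funD].
  by apply: eq_integral => x _; exact: funeD_posneg _ _ _ (fNy x) (gNy x).
have Nfg_le : \int[mu]_x (f \+ g)^\- x <= \int[mu]_x f^\- x + \int[mu]_x g^\- x.
  rewrite -ge0_integralD //.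
  apply: ge0_le_integral => //; first exact: emeasurable_funD.
  by move=> x _; exact: funenegD_le _ _ _ (fNy x) (gNy x).
have Nfg_fin : \int[mu]_x (f \+ g)^\- x \is a fin_num.
  rewrite ge0_fin_numE ?integral_ge0 // (le_lt_trans Nfg_le) //.
  by rewrite ltey_eq fin_numD Nf_fin Ng_fin.
rewrite addeACA -fin_num_oppeD // leeBrDr // [_ - _ + _]addeAC leeBlDr; last first.
  by rewrite fin_numD Nf_fin Ng_fin.
by rewrite parts addeC.
Qed.

Lemma esum_neqNy (I : eqType) (r : seq I) (F : I -> \bar R) :
  (forall i, F i != -oo) -> \sum_(i <- r) F i != -oo.
Proof. by move=> FNy; apply/eqP => /esum_eqNyP[i [_ _ /eqP]]; apply/negP. Qed.

Lemma emeasurable_sum_in (D : set T) (I : eqType) (r : seq I) (h : I -> T -> \bar R) :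
  (forall i, i \in r -> measurable_fun D (h i)) ->
  measurable_fun D (fun x => \sum_(i <- r) h i x).
Proof.
elim: r => [|i r IH] mh.
  by under eq_fun do rewrite big_nil; exact: measurable_cst.
under eq_fun do rewrite big_cons.
apply: emeasurable_funD; first by apply: mh; rewrite mem_head.
by apply: IH => j jr; apply: mh; rewrite in_cons jr orbT.
Qed.

Lemma le_integral_sum (mu : {measure set T -> \bar R}) (I : eqType) (r : seq I)
    (f : I -> T -> \bar R) :
  (forall i, measurable_fun setT (f i)) -> (forall i x, f i x != -oo) ->
  \sum_(i <- r) \int[mu]_x f i x <= \int[mu]_x \sum_(i <- r) f i x.
Proof.
move=> mf fNy; elim: r => [|i r IH].
  by rewrite big_nil; under eq_integral do rewrite big_nil; rewrite integral0.
under [X in _ <= X]eq_integral do rewrite big_cons.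
rewrite big_cons; apply: le_trans (le_integralD mu _ _ (mf i) _ (fNy i) _).
- exact: leeD.
- exact: emeasurable_sum.
- by move=> x; apply: esum_neqNy => j.
Qed.

End integral_superadditive.

Section sigmaW.
Context {R : realType} {d : measure_display} {Omega : measurableType d}.
Variables (N : finType) (IW : N -> finType) (W : nat -> forall n : N, IW n -> Omega -> R).
Hypothesis mW : forall t n i, measurable_fun setT (W t n i).

Lemma sigmaW_sub_measurable s t : sigmaW W s t `<=` measurable.
Proof.
apply: smallest_sub; first exact: sigma_algebra_measurable.
move=> _ [r [n [i [B [_ mB ->]]]]].
by rewrite -[_ @^-1` _]setTI; exact: mW.
Qed.

Lemma measurable_wrt_sigmaW s t (Z : Omega -> R) :
  measurable_wrt (sigmaW W s t) Z -> measurable_fun setT Z.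
Proof.
by move=> mZ _ B mB; rewrite setTI; exact: sigmaW_sub_measurable (mZ B mB).
Qed.

End sigmaW.

Section nodal_cost.
Context {R : realType} {d : measure_display} {Omega : measurableType d}.
Variables (T : nat) (H I J : finType) (Wn : nat -> I -> Omega -> R).
Variables (g : nat -> R -> (I -> R) -> (J -> R) -> R)
          (L : nat -> R -> (I -> R) -> (J -> R) -> \bar R)
          (K : R -> \bar R) (lam : nat -> H -> R).
Variables (s : nat) (x : R) (U : nat -> J -> Omega -> R) (F : nat -> H -> Omega -> R).

Hypotheses (mWn : forall t i, measurable_fun setT (Wn t i))
  (mg : forall t, jmeas_xwu (Omega := Omega) (g t))
  (mL : forall t, jmeas_xwu (Omega := Omega) (L t))
  (mK : measurable_fun setT K)
  (mU : forall t, (s <= t <= T)%N -> forall j, measurable_fun setT (U t j))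
  (mF : forall t, (s <= t <= T)%N -> forall h, measurable_fun setT (F t h)).

Lemma measurable_traj k :
  (k <= T.+1 - s)%N -> measurable_fun setT (traj g Wn U s x k).
Proof.
elim: k => [|k IH] kT /=; first exact: measurable_cst.
have skT : (s <= s + k <= T)%N by rewrite leq_addr /= -ltnS -ltn_subRL.
apply: mg; [exact/IH/ltnW | exact: mWn | exact: mU].
Qed.

Lemma measurable_state t :
  (t <= T.+1)%N -> measurable_fun setT (state g Wn U s x t).
Proof. by move=> tT; apply: measurable_traj; exact: leq_sub2r. Qed.

Lemma measurable_nodal_cost :
  measurable_fun setT (nodal_cost T H I J Wn g L K lam s x U F).
Proof.
apply: emeasurable_funD; last exact/(measurableT_comp mK)/measurable_state.
apply: emeasurable_sum_in => t; rewrite mem_index_iota => /andP[st tT].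
have stT : (s <= t <= T)%N by rewrite st -ltnS.
apply: emeasurable_funD.
  by apply: mL => [|i|j]; [exact/measurable_state/ltnW | exact: mWn | exact: mU].
apply/measurable_EFinP/measurable_sum => h.
exact/measurable_funM/mF.
Qed.

Lemma nodal_cost_neqNy w :
  (forall t y v u, L t y v u != -oo) -> (forall y, K y != -oo) ->
  nodal_cost T H I J Wn g L K lam s x U F w != -oo.
Proof.
move=> LNy KNy; rewrite adde_eq_ninfty negb_or KNy andbT.
by apply: esum_neqNy => t; rewrite adde_eq_ninfty negb_or LNy.
Qed.

End nodal_cost.

Section transport_cost.
Context {R : realType} {d : measure_display} {Omega : measurableType d}.
Variables (T : nat) (N A H : finType) (src tgt : A -> N).
Variables (La : A -> nat -> (H -> R) -> \bar R) (lam : nat -> N -> H -> R).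
Variables (s : nat) (Q : nat -> A -> H -> Omega -> R).

Hypotheses (mLa : forall a t, jmeas_vec (Omega := Omega) (La a t))
  (mQ : forall t, (s <= t <= T)%N -> forall a h, measurable_fun setT (Q t a h)).

Lemma measurable_transport_cost :
  measurable_fun setT (transport_cost T N A H src tgt La lam s Q).
Proof.
apply: emeasurable_sum_in => t; rewrite mem_index_iota => /andP[st tT].
have stT : (s <= t <= T)%N by rewrite st -ltnS.
apply: emeasurable_funB.
  by apply: emeasurable_sum => a; apply: mLa => h; exact: mQ.
apply/measurable_EFinP/measurable_sum => h; apply: measurable_sum => a.
exact/measurable_funM/mQ.
Qed.

Lemma transport_cost_neqNy w : (forall a t q, La a t q != -oo) ->
  transport_cost T N A H src tgt La lam s Q w != -oo.
Proof.
move=> LaNy; apply: esum_neqNy => t.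
by rewrite adde_eq_ninfty negb_or andbT; apply: esum_neqNy.
Qed.

End transport_cost.

Lemma adjoint_pairing (R : comPzRingType) (N A H : finType) (B : N -> A -> R)
    (lam : N -> H -> R) (Q : A -> H -> R) :
  (\sum_(n : N) \sum_(h : H) lam n h * \sum_(a : A) B n a * Q a h =
   \sum_(h : H) \sum_(a : A) (\sum_(n : N) B n a * lam n h) * Q a h)%R.
Proof.
under eq_bigr do under eq_bigr do rewrite mulr_sumr.
rewrite exchange_big /=; apply: eq_bigr => h _.
rewrite exchange_big /=; apply: eq_bigr => a _.
by rewrite mulr_suml; apply: eq_bigr => n _; rewrite mulrA [(lam n h * _)%R]mulrC.
Qed.

Section weak_duality.
Context {R : realType} {d : measure_display} {Omega : measurableType d}.
Context (P : probability Omega R) {T : nat} {Info : nat -> nat -> set (set Omega)}.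
Context {N A H : finType} {src tgt : A -> N} {IW IU : N -> finType}.
Context {W : nat -> forall n : N, IW n -> Omega -> R}
        {g : forall n : N, nat -> R -> (IW n -> R) -> (IU n -> R) -> R}
        {b : forall n : N, nat -> (IW n -> R) -> (IU n -> R) -> H -> R}
        {box : forall n : N, nat -> R -> (IW n -> R) -> (IU n -> R) -> Prop}
        {L : forall n : N, nat -> R -> (IW n -> R) -> (IU n -> R) -> \bar R}
        {La : A -> nat -> (H -> R) -> \bar R}
        {K : N -> R -> \bar R} (lam : nat -> N -> H -> R).
Context {s : nat} {x : N -> R} {U : nat -> forall n : N, IU n -> Omega -> R}
        {Q : nat -> A -> H -> Omega -> R}.

Let node_cost (F : nat -> N -> H -> Omega -> R) n :=
  nodal_cost T H (IW n) (IU n) (fun t i => W t n i) (g n) (L n) (K n)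
    (fun t h => lam t n h) s (x n) (fun t j => U t n j) (fun t h => F t n h).

Let arc_cost := transport_cost T N A H src tgt La lam s Q.

Definition coupled (F : nat -> N -> H -> Omega -> R) (w : Omega) :=
  forall t, (s <= t <= T)%N ->
    forall n h, F t n h w = (\sum_(a : A) incidence src tgt n a * Q t a h w)%R.

Lemma global_cost_split F w : coupled F w ->
  \sum_(n : N) node_cost F n w + arc_cost w =
  global_cost T N A H IW IU W g L La K s x U Q w.
Proof.
move=> FBQ; rewrite /node_cost /arc_cost /nodal_cost /transport_cost /global_cost.
rewrite big_split /= exchange_big /= addeAC; congr (_ + _).
rewrite -big_split /=; apply: eq_big_nat => t /andP[st tT].
have stT : (s <= t <= T)%N by rewrite st -ltnS.
rewrite big_split /= sumEFin.
have -> : (\sum_n \sum_h lam t n h * F t n h w =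
  \sum_h \sum_a (\sum_n incidence src tgt n a * lam t n h) * Q t a h w)%R.
  rewrite -adjoint_pairing; apply: eq_bigr => n _.
  by under eq_bigr do rewrite FBQ //.
by rewrite addeACA subee // adde0.
Qed.

Section admissible_restriction.
Context {F : nat -> N -> H -> Omega -> R}.
Hypothesis adm : global_admissible P T Info N A H src tgt IW IU W g b box s x U F Q.

Lemma nodal_admissible_of_global n :
  nodal_admissible P T Info H (IW n) (IU n) (fun t i => W t n i) (g n) (b n) (box n)
    s (x n) (fun t j => U t n j) (fun t h => F t n h).
Proof.
move=> t /adm[mU mF _ ae]; split=> [j|h|]; [exact: mU | exact: mF |].
by apply: filterS ae => w [/(_ n)].
Qed.

Lemma transport_admissible_of_global : transport_admissible T Info A H s Q.
Proof. by move=> t /adm[]. Qed.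

Lemma ae_coupled_of_global : {ae P, forall w, coupled F w}.
Proof.
apply: ae_foralln => t.
have [/adm[_ _ _ ae]|_] := boolP (s <= t <= T)%N; last exact: aeW.
by apply: filterS ae => w [_ FBQ] _.
Qed.

End admissible_restriction.

Hypotheses (mW : forall t n i, measurable_fun setT (W t n i))
  (mg : forall n t, jmeas_xwu (Omega := Omega) (g n t))
  (mL : forall n t, jmeas_xwu (Omega := Omega) (L n t))
  (mLa : forall a t, jmeas_vec (Omega := Omega) (La a t))
  (mK : forall n, measurable_fun setT (K n))
  (mU : forall t, (s <= t <= T)%N -> forall n j, measurable_fun setT (U t n j))
  (mQ : forall t, (s <= t <= T)%N -> forall a h, measurable_fun setT (Q t a h)).

Lemma measurable_node_cost F n :
  (forall t, (s <= t <= T)%N -> forall n h, measurable_fun setT (F t n h)) ->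
  measurable_fun setT (node_cost F n).
Proof.
by move=> mF; apply: measurable_nodal_cost => // t stT; [exact: mU | exact: mF].
Qed.

Lemma measurable_global_cost :
  measurable_fun setT (global_cost T N A H IW IU W g L La K s x U Q).
Proof.
pose BQ t n h w := (\sum_(a : A) incidence src tgt n a * Q t a h w)%R.
rewrite -(funext (fun w => global_cost_split BQ w (fun _ _ _ _ => erefl))).
apply: emeasurable_funD; last exact: measurable_transport_cost.
apply: emeasurable_sum => n; apply: measurable_node_cost => t stT n' h.
by apply: measurable_sum => a; exact/measurable_funM/mQ.
Qed.

Hypotheses (LNy : forall n t y v u, L n t y v u != -oo)
  (LaNy : forall a t q, La a t q != -oo) (KNy : forall n y, K n y != -oo).

Lemma le_integral_global_cost F :
  (forall t, (s <= t <= T)%N -> forall n h, measurable_fun setT (F t n h)) ->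
  {ae P, forall w, coupled F w} ->
  \sum_(n : N) \int[P]_w node_cost F n w + \int[P]_w arc_cost w <=
  \int[P]_w global_cost T N A H IW IU W g L La K s x U Q w.
Proof.
move=> mF FBQ.
have mnode n := measurable_node_cost F n mF.
have node_neqNy n w : node_cost F n w != -oo by exact: nodal_cost_neqNy.
have marc : measurable_fun setT arc_cost by exact: measurable_transport_cost.
have arc_neqNy w : arc_cost w != -oo by exact: transport_cost_neqNy.
apply: le_trans (leeD (le_integral_sum P _ _ _ mnode node_neqNy) (lexx _)) _.
apply: le_trans (le_integralD P _ _ (emeasurable_sum _ mnode) marc _ arc_neqNy) _.
  by move=> w; exact: esum_neqNy.
rewrite (ae_eq_integral (global_cost T N A H IW IU W g L La K s x U Q)) //.
- exact: emeasurable_funD (emeasurable_sum _ mnode) marc.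
- exact: measurable_global_cost.
- by apply: filterS FBQ => w /global_cost_split.
Qed.

End weak_duality.

Local Close Scope ereal_scope.

Theorem proposition2 (R : realType) (d : measure_display) (Omega : measurableType d)
    (P : probability Omega R)
    (T : nat) (N A H : finType) (src tgt : A -> N) (IW IU : N -> finType)
    (W : nat -> forall n : N, IW n -> Omega -> R)
    (Xs : N -> nat -> set R)
    (g : forall n : N, nat -> R -> (IW n -> R) -> (IU n -> R) -> R)
    (b : forall n : N, nat -> (IW n -> R) -> (IU n -> R) -> H -> R)
    (box : forall n : N, nat -> R -> (IW n -> R) -> (IU n -> R) -> Prop)
    (L : forall n : N, nat -> R -> (IW n -> R) -> (IU n -> R) -> \bar R)
    (La : A -> nat -> (H -> R) -> \bar R)
    (K : N -> R -> \bar R)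
    (lam : nat -> N -> H -> R) :
  (forall t n i, measurable_fun setT (W t n i)) ->
  (forall n t, jmeas_xwu (Omega := Omega) (g n t)) ->
  (forall n t, jmeas_xwu (Omega := Omega) (L n t)) ->
  (forall a t, jmeas_vec (Omega := Omega) (La a t)) ->
  (forall n, measurable_fun setT (K n)) ->
  (forall n t x w u, L n t x w u != -oo%E) ->
  (forall a t q, La a t q != -oo%E) ->
  (forall n x, K n x != -oo%E) ->
  weekly_independent P T W ->
  forall (s : nat) (x : N -> R), (s <= T)%N -> (forall n, Xs n s (x n)) ->
  (\sum_(n : N)
      Vnode P T (sigmaW W) H (IW n) (IU n) (fun t i => W t n i)
            (g n) (b n) (box n) (L n) (K n) (fun t h => lam t n h) s (x n)
   + VA P T (sigmaW W) N A H src tgt La lam s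
   <= Vglob P T (sigmaW W) N A H src tgt IW IU W g b box L La K s x)%E.
Proof.
move=> mW mg mL mLa mK LNy LaNy KNy _ s x _ _.
apply/ereal_infP => _ [U [F [Q [adm ->]]]].
have mU t (stT : (s <= t <= T)%N) n j : measurable_fun setT (U t n j).
  by have [+ _ _ _] := adm t stT => /(_ n j)/measurable_wrt_sigmaW; exact.
have mF t (stT : (s <= t <= T)%N) n h : measurable_fun setT (F t n h).
  by have [_ + _ _] := adm t stT => /(_ n h)/measurable_wrt_sigmaW; exact.
have mQ t (stT : (s <= t <= T)%N) a h : measurable_fun setT (Q t a h).
  by have [_ _ + _] := adm t stT => /(_ a h)/measurable_wrt_sigmaW; exact.
apply: le_trans (le_integral_global_cost P lam mW mg mL mLa mK mU mQ LNy LaNy KNy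
  _ mF (ae_coupled_of_global P adm)).
apply: leeD.
  apply: lee_sum => n _; apply: ereal_inf_lbound.
  exists (fun t j => U t n j), (fun t h => F t n h); split => //.
  exact: (nodal_admissible_of_global P adm n).
apply: ereal_inf_lbound; exists Q; split => //.
exact: (transport_admissible_of_global P adm).
Qed.
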